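(* Let $L\subseteq\mathcal{L}$ satisfy \[\forall e\in L:\quad\sum_{\{e'\in L\setminus\{e\}:d_{e'}\ge d_e\}}\big(\bar a_e(e')+\bar a_{e'}(e)\big)\le1.\] Then there exists $J\subseteq L$ such that $|J|\ge|L|/2$ and $\sum_{e'\in J\setminus\{e\}}\bar a_{e'}(e)\le3$ for every $e\in J$.
   Context: Constants $\alpha\ge0,N>0,\beta>0$. A link is $e=(s_e,r_e,P_e)$ with transmitter, receiver (points in the plane) and power $P_e>0$; $\mathcal{L}$ is the set of links. $d_e=d(s_e,r_e)$, $d_{e'e}=d(s_{e'},r_e)$, $S_e=P_e/d_e^\alpha$, $S_{e'e}=P_{e'}/d_{e'e}^\alpha$, $\gamma_e=\beta S_e/(S_e-\beta N)$, $a_{e'}(e)=\gamma_eS_{e'e}/S_e$, $\bar a_{e'}(e)=\min\{1,a_{e'}(e)\}$. *)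

From mathcomp Require Import all_boot all_order all_algebra.
From mathcomp Require Import reals exp.
Set Implicit Arguments. Unset Strict Implicit. Unset Printing Implicit Defensive.
Import Order.TTheory GRing.Theory Num.Theory.
Local Open Scope ring_scope.

Section Defs.
Variable R : realType.

Definition point := (R * R)%type.

Definition dist (p q : point) : R :=
  Num.sqrt ((p.1 - q.1) ^+ 2 + (p.2 - q.2) ^+ 2).

Definition link := (point * point * R)%type.
Definition sender (e : link) : point := e.1.1.
Definition receiver (e : link) : point := e.1.2.
Definition power (e : link) : R := e.2.

Variables (alpha N beta : R).

Definition len (e : link) : R := dist (sender e) (receiver e).
Definition cross_dist (e' e : link) : R := dist (sender e') (receiver e).
Definition signal (e : link) : R := power e / powR (len e) alpha.
Definition cross_signal (e' e : link) : R := power e' / powR (cross_dist e' e) alpha.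
Definition gamma (e : link) : R := beta * signal e / (signal e - beta * N).
Definition affect (e' e : link) : R := gamma e * cross_signal e' e / signal e.
Definition affect_bar (e' e : link) : R := Num.min 1 (affect e' e).

End Defs.

(* Summing the incoming interference [sum_(e' != e) abar_e'(e)] over all links
   of [L] counts every ordered pair once; grouping each pair at its shorter link
   shows that this total is at most the sum of the left-hand sides of the
   hypothesis, hence at most |L|.  By Markov's inequality fewer than half of the
   links receive interference above 2, and the remaining links form J: passing to
   a subset only decreases interference, so the bound 2 <= 3 survives in J. *)
From mathcomp Require Import all_boot all_order all_algebra.
From mathcomp Require Import reals exp lra.
Set Implicit Arguments. Unset Strict Implicit. Unset Printing Implicit Defensive.
Import Order.TTheory GRing.Theory Num.Theory.
Local Open Scope ring_scope.

Section Counting.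
Variables (R : realFieldType) (T : eqType).

Lemma sum_filter_le (s : seq T) (P Q : pred T) (F : T -> R) :
  (forall x, x \in s -> 0 <= F x) ->
  \sum_(x <- [seq y <- s | P y] | Q x) F x <= \sum_(x <- s | Q x) F x.
Proof.
move=> F_ge0; rewrite big_filter_cond big_mkcond [leRHS]big_mkcond.
rewrite big_seq [leRHS]big_seq; apply: ler_sum => x xs.
by case: (Q x); case: (P x) => //=; apply: F_ge0.
Qed.

Lemma sum_incoming_le_sum_oriented (L : seq T) (w : T -> T -> R) (key : T -> R) :
  (forall e e', e \in L -> e' \in L -> 0 <= w e' e) ->
  \sum_(e <- L) \sum_(e' <- L | e' != e) w e' e <=
  \sum_(e <- L) \sum_(e' <- L | (e' != e) && (key e <= key e')) (w e e' + w e' e).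
Proof.
move=> w_ge0.
pose up e e' := if (e' != e) && (key e <= key e') then w e' e else 0.
pose down e e' := if (e' != e) && (key e' <= key e) then w e' e else 0.
have -> : \sum_(e <- L) \sum_(e' <- L | (e' != e) && (key e <= key e'))
            (w e e' + w e' e) =
          \sum_(e <- L) \sum_(e' <- L) (up e e' + down e e').
  under eq_bigr => e _ do rewrite big_split /= [X in X + _]big_mkcond [X in _ + X]big_mkcond.
  rewrite big_split /= exchange_big -big_split /=.
  apply: eq_bigr => e _; rewrite -big_split /=.
  apply: eq_bigr => e' _; rewrite /up /down (eq_sym e e') addrC.
  by case: (_ && _).
rewrite big_seq [leRHS]big_seq; apply: ler_sum => e eL.
rewrite big_mkcond big_seq [leRHS]big_seq; apply: ler_sum => e' e'L.
rewrite /up /down; case: (e' != e) => /=; last by rewrite addr0.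
(* Pairs with equal keys are counted in both orientations; nonnegativity absorbs this. *)
have w_ge0' := w_ge0 e e' eL e'L.
by case: (lerP (key e) (key e')) => [_|/ltW ->]; rewrite ?lerDl ?add0r //; case: ifP.
Qed.

Lemma count_gt_le_sum (s : seq T) (f : T -> R) (t : R) :
  (forall x, x \in s -> 0 <= f x) ->
  t * (count (fun x => t < f x) s)%:R <= \sum_(x <- s) f x.
Proof.
elim: s => [|x s IH] f_ge0; first by rewrite big_nil mulr0.
rewrite big_cons /= natrD mulrDr; apply: lerD; last first.
  by apply: IH => y ys; apply: f_ge0; rewrite inE ys orbT.
case: ltP => [/ltW|_]; first by rewrite mulr1.
by rewrite mulr0; apply: f_ge0; rewrite mem_head.
Qed.

Lemma half_size_filter_le2 (s : seq T) (f : T -> R) :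
  (forall x, x \in s -> 0 <= f x) -> \sum_(x <- s) f x <= (size s)%:R ->
  (size s)%:R / 2 <= (size [seq x <- s | f x <= 2])%:R :> R.
Proof.
move=> f_ge0 sum_le.
have := count_gt_le_sum 2 f_ge0; rewrite -size_filter => markov.
have partition : addn (size [seq x <- s | f x <= 2])
                       (size [seq x <- s | 2 < f x]) = size s.
  rewrite !size_filter -(count_predC (fun x => f x <= 2) s); congr addn.
  by apply: eq_count => x /=; rewrite ltNge.
rewrite -partition natrD in sum_le *; rewrite ler_pdivrMr //; lra.
Qed.

End Counting.

Lemma affect_bar_ge0 (R : realType) (alpha N beta : R) (e' e : link R) :
  0 < N -> 0 < beta -> 0 < power e' -> 0 < cross_dist e' e ->
  beta * N < signal alpha e -> 0 <= affect_bar alpha N beta e' e.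
Proof.
move=> N_gt0 beta_gt0 P_gt0 d_gt0 noise_lt.
have S_gt0 : 0 < signal alpha e by apply: lt_trans noise_lt; apply: mulr_gt0.
have SINR_gt0 : 0 < signal alpha e - beta * N by rewrite subr_gt0.
have cross_gt0 : 0 < cross_signal alpha e' e.
  by rewrite divr_gt0 // powR_gt0.
rewrite le_min ler01 /affect /gamma ltW //.
by apply: divr_gt0 => //; apply: mulr_gt0 => //; apply: divr_gt0 => //;
  apply: mulr_gt0.
Qed.

Theorem lemma8 (R : realType) (alpha N beta : R)
  (halpha : 0 <= alpha) (hN : 0 < N) (hbeta : 0 < beta)
  (L : seq (link R)) (Luniq : uniq L)
  (hP : forall e, e \in L -> 0 < power e)
  (hdist : forall e e', e \in L -> e' \in L -> 0 < cross_dist e' e)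
  (hnoise : forall e, e \in L -> beta * N < signal alpha e)
  (hL : forall e, e \in L ->
     \sum_(e' <- L | (e' != e) && (len e <= len e'))
        (affect_bar alpha N beta e e' + affect_bar alpha N beta e' e) <= 1) :
  exists J : seq (link R),
    [/\ uniq J, {subset J <= L}, (size L)%:R / 2 <= (size J)%:R :> R &
        forall e, e \in J ->
          \sum_(e' <- J | e' != e) affect_bar alpha N beta e' e <= 3].
Proof.
set b := affect_bar alpha N beta.
have b_ge0 e e' : e \in L -> e' \in L -> 0 <= b e' e.
  by move=> eL e'L; apply: affect_bar_ge0; rewrite ?hP ?hdist ?hnoise.
pose incoming e := \sum_(e' <- L | e' != e) b e' e.
have incoming_ge0 e : e \in L -> 0 <= incoming e.
  by move=> eL; rewrite /incoming big_seq_cond sumr_ge0 // => e' /andP[e'L _]; apply: b_ge0.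
have total_le : \sum_(e <- L) incoming e <= (size L)%:R.
  apply: le_trans (sum_incoming_le_sum_oriented (@len R) b_ge0) _.
  rewrite -sum1_size natr_sum big_seq [leRHS]big_seq.
  by apply: ler_sum => e /hL.
exists [seq e <- L | incoming e <= 2]; split.
- exact: filter_uniq.
- by move=> e; rewrite mem_filter => /andP[].
- exact: half_size_filter_le2.
- move=> e; rewrite mem_filter => /andP[incoming_le eL].
  apply: le_trans (sum_filter_le _ _ (fun e' => b_ge0 e e' eL)) _.
  by apply: le_trans incoming_le _; rewrite ler_nat.
Qed.
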